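(* Let $n=n_1+\dots+n_m$ with each $n_i\in\{1,2,3\}$, partition $[n]$ into disjoint blocks $B_1,\dots,B_m$ with $|B_i|=n_i$, and let $f(S)=\sum_{i=1}^m f_i(S\cap B_i)$ where each $f_i:2^{B_i}\to\mathbb{R}_+$ is monotone submodular. Then $f^{+}(\mathbf{x})/f^{++}(\mathbf{x})\le4/3$ for all $\mathbf{x}\in[0,1]^n$ (with the convention $0/0=1$).
   Context: $[n]=\{1,\dots,n\}$. A set function $f:2^{V}\to\mathbb{R}_+$ is monotone if $f(S)\le f(T)$ for $S\subseteq T$, submodular if $f(S)+f(T)\ge f(S\cap T)+f(S\cup T)$. For $\mathbf{x}\in[0,1]^n$: the concave closure $f^{+}(\mathbf{x})=\max\sum_{S\subseteq[n]}\theta(S)f(S)$ over $\theta:2^{[n]}\to\mathbb{R}_{\ge0}$ with $\sum_S\theta(S)=1$ and $\sum_{S\ni i}\theta(S)=x_i$ for all $i$; the upper pairwise independent extension $f^{++}(\mathbf{x})$ is the same maximum with the additional constraints $\sum_{S\ni i,j}\theta(S)=x_ix_j$ for all $i<j$. *)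

From HB Require Import structures.
From mathcomp Require Import all_boot all_order all_algebra.
From mathcomp Require Import classical_sets reals.
Set Implicit Arguments. Unset Strict Implicit. Unset Printing Implicit Defensive.
Import Order.TTheory GRing.Theory Num.Theory.
Local Open Scope ring_scope.
Local Open Scope classical_set_scope.

Section Ext.
Variables (R : realType) (n : nat).

Definition marg_feasible (x : 'I_n -> R) (theta : {ffun {set 'I_n} -> R}) : Prop :=
  (forall S : {set 'I_n}, 0 <= theta S) /\ (\sum_(S : {set 'I_n}) theta S = 1) /\
  (forall i : 'I_n, \sum_(S : {set 'I_n} | i \in S) theta S = x i).

Definition pair_feasible (x : 'I_n -> R) (theta : {ffun {set 'I_n} -> R}) : Prop :=
  marg_feasible x theta /\
  (forall i j : 'I_n, (i < j)%N -> \sum_(S : {set 'I_n} | (i \in S) && (j \in S)) theta S = x i * x j).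

Definition concave_closure (f : {set 'I_n} -> R) (x : 'I_n -> R) : R :=
  sup [set v | exists theta, marg_feasible x theta /\ v = \sum_(S : {set 'I_n}) theta S * f S].

Definition upper_pairwise_ext (f : {set 'I_n} -> R) (x : 'I_n -> R) : R :=
  sup [set v | exists theta, pair_feasible x theta /\ v = \sum_(S : {set 'I_n}) theta S * f S].

Definition mono_submod_on (B : {set 'I_n}) (f : {set 'I_n} -> R) : Prop :=
  (forall S : {set 'I_n}, S \subset B -> 0 <= f S) /\
  (forall S T : {set 'I_n}, S \subset B -> T \subset B -> S \subset T -> f S <= f T) /\
  (forall S T : {set 'I_n}, S \subset B -> T \subset B -> f (S :&: T) + f (S :|: T) <= f S + f T).

End Ext.

Definition block (n m : nat) (blk : 'I_n -> 'I_m) (i : 'I_m) : {set 'I_n} :=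
  [set j | blk j == i].

(* For each block B choose a law g on the subsets of B whose moments of order at most 2
   are those of the product law with marginals x: the product law itself when |B| <= 2,
   and when |B| = 3 the product law shifted by t times the parity (-1)^|B \ T|, which only
   changes the third moment. The product of the block laws is then pairwise independent
   and its value is the sum of the block values, so it suffices to show that each block law
   attains 3/4 of the concave closure of f_i at x.
   A monotone submodular function on at most three points is a constant plus a nonnegative
   combination of uniform matroid ranks min(|A :&: S|, k): singletons and pairs with k = 1,
   and the whole block with k = 1 or k = 2 according to the sign of the third Moebius
   coefficient. Any law with marginals x gives such a rank at most min(sum_(j in A) x j, k),
   while the block law gives x j on a singleton, x i + x j - x i x j on a pair, and, for a
   suitable t, at least 3/4 of the bound on the whole block. *)

From mathcomp Require Import classical_sets reals.
From mathcomp Require Import all_boot all_order all_algebra.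
From mathcomp Require Import ring lra zify.
Import Order.TTheory GRing.Theory Num.Theory.
Set Implicit Arguments. Unset Strict Implicit. Unset Printing Implicit Defensive.
Local Open Scope ring_scope.

Section SubsetSums.
Variables (R : comPzSemiRingType) (I : finType).

Lemma sum_subset_prod (B : {set I}) (h : I -> bool -> R) :
  \sum_(T : {set I} | T \subset B) \prod_(j in B) h j (j \in T) =
  \prod_(j in B) (h j true + h j false).
Proof.
pose hB j b := if j \in B then h j b else (~~ b)%:R.
transitivity (\sum_(T : {set I}) \prod_j (if j \in T then hB j true else hB j false)).
  rewrite [RHS](bigID (fun T : {set I} => T \subset B)) /= [X in _ = _ + X]big1 ?addr0.
    apply: eq_bigr => T sTB; rewrite [RHS](bigID (mem B)) /= [X in _ = _ * X]big1 ?mulr1.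
      by apply: eq_bigr => j jB; rewrite /hB jB; case: (j \in T).
    move=> j jNB; have jNT : j \notin T by apply: contra jNB; apply: (subsetP sTB).
    by rewrite /hB (negbTE jNB) (negbTE jNT).
  by move=> T /subsetPn[j jT jNB]; rewrite (bigD1 j) //= jT /hB (negbTE jNB) mul0r.
rewrite -bigA_distr [RHS]big_mkcond; apply: eq_bigr => j _.
by rewrite /hB; case: (j \in B); rewrite //= add0r.
Qed.

Lemma prod_mkcond_subset (L B : {set I}) (F : I -> R) : L \subset B ->
  \prod_(j in L) F j = \prod_(j in B) (if j \in L then F j else 1).
Proof.
move=> sLB; rewrite -big_mkcondr; apply: eq_bigl => j.
by case: (boolP (j \in L)) => jL; rewrite ?andbF ?andbT // (subsetP sLB).
Qed.

Lemma subset_natrE (L T : {set I}) :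
  (L \subset T)%:R = \prod_(j in L) ((j \in T)%:R : R).
Proof.
have [sLT|/subsetPn[j jL jNT]] := boolP (L \subset T).
  by rewrite big1 // => j jL; rewrite (subsetP sLT).
by rewrite (bigD1 j) //= (negbTE jNT) mul0r.
Qed.

End SubsetSums.

Section BlockLaw.
Variables (R : comPzRingType) (I : finType) (x : I -> R).

Definition prod_law (B T : {set I}) : R :=
  \prod_(j in B) (if j \in T then x j else 1 - x j).

Definition parity (B T : {set I}) : R := \prod_(j in B) (if j \in T then 1 else -1).

Definition block_law (t : R) (B T : {set I}) : R := prod_law B T + t * parity B T.

Lemma block_law_moment t (L B : {set I}) : L \subset B ->
  \sum_(T : {set I} | T \subset B) block_law t B T * (L \subset T)%:R =
  \prod_(l in L) x l + t * (B \subset L)%:R.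
Proof.
move=> sLB; pose restr j (v : R) := if j \in L then v else 1.
have -> : \prod_(l in L) x l = \prod_(j in B) restr j (x j) by exact: prod_mkcond_subset.
rewrite [(B \subset L)%:R]subset_natrE.
under [LHS]eq_bigr => T _.
  rewrite subset_natrE (prod_mkcond_subset _ sLB) mulrDl -mulrA -!big_split /=.
over.
rewrite big_split /= -mulr_sumr.
rewrite (sum_subset_prod B (fun j b => (if b then x j else 1 - x j) * restr j b%:R)).
rewrite (sum_subset_prod B (fun j b => (if b then 1 else -1) * restr j b%:R)).
congr (_ + _ * _); apply: eq_bigr => j _; rewrite /restr; case: (j \in L) => /=.
- by rewrite mulr1 mulr0 addr0.
- by rewrite !mulr1 addrC subrK.
- by rewrite mulr1 mulr0 addr0.
- by rewrite !mulr1 subrr.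
Qed.

End BlockLaw.

Section Blocks.
Variables (n m : nat) (blk : 'I_n -> 'I_m).

Lemma sum_prod_blocks (R : comPzSemiRingType) (G : 'I_m -> {set 'I_n} -> R) :
  \sum_(S : {set 'I_n}) \prod_(k < m) G k (S :&: block blk k) =
  \prod_(k < m) \sum_(T : {set 'I_n} | T \subset block blk k) G k T.
Proof.
pose Gc k (T : {set 'I_n}) := if T \subset block blk k then G k T else 0.
transitivity (\prod_(k < m) \sum_(T : {set 'I_n}) Gc k T); last first.
  by apply: eq_bigr => k _; rewrite [RHS]big_mkcond.
rewrite bigA_distr_bigA /= (bigID (fun U : {ffun 'I_m -> {set 'I_n}} =>
  [forall k, U k \subset block blk k])) /= [X in _ = _ + X]big1 ?addr0; last first.
  by move=> U /forallPn[k hk]; rewrite (bigD1 k) //= /Gc (negbTE hk) mul0r.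
rewrite (reindex_onto (fun S => [ffun k => S :&: block blk k])
  (fun U => \bigcup_(k < m) U k)) /=; last first.
  move=> U /forallP sU; apply/ffunP => k; rewrite ffunE; apply/setP => j.
  rewrite inE; apply/andP/idP => [[/bigcupP[l _ jl] jk]|jk].
    by move: (subsetP (sU l) j jl) jk; rewrite !inE => /eqP -> /eqP <-.
  by split; [apply/bigcupP; exists k | exact: (subsetP (sU k))].
apply: eq_big => [S|S _]; last first.
  by apply: eq_bigr => k _; rewrite ffunE /Gc subsetIr.
have -> : [forall k, [ffun k => S :&: block blk k] k \subset block blk k].
  by apply/forallP => k; rewrite ffunE subsetIr.
apply/esym/eqP/setP => j; apply/bigcupP/idP => [[k _]|jS].
  by rewrite ffunE inE => /andP[].
by exists (blk j); rewrite // ffunE !inE jS /=.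
Qed.

Lemma prod_partition_blocks (R : comPzSemiRingType) (L : {set 'I_n}) (F : 'I_n -> R) :
  \prod_(l in L) F l = \prod_(k < m) \prod_(l in L :&: block blk k) F l.
Proof.
rewrite (partition_big blk xpredT) //=; apply: eq_bigr => k _.
by apply: eq_bigl => l; rewrite !inE.
Qed.

Lemma subset_natr_blocks (R : comPzSemiRingType) (L S : {set 'I_n}) :
  (L \subset S)%:R = \prod_(k < m) ((L :&: block blk k \subset S :&: block blk k)%:R : R).
Proof.
rewrite subset_natrE prod_partition_blocks; apply: eq_bigr => k _.
rewrite subset_natrE; apply: eq_bigr => j; rewrite !inE => /andP[_ jk].
by rewrite jk andbT.
Qed.

End Blocks.

Section ThreeQuarters.
Variable R : realFieldType.
Implicit Types a b c : R.

Lemma three_quarters_or2 a b : 0 <= a <= 1 -> 0 <= b <= 1 ->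
  3 / 4 * Order.min (a + b) 1 <= a + b - a * b.
Proof.
move=> /andP[a0 a1] /andP[b0 b1].
have sq : 0 <= (a - b) ^+ 2 by rewrite sqr_ge0.
have sqc : 0 <= ((1 - a) - (1 - b)) ^+ 2 by rewrite sqr_ge0.
case: (lerP (a + b) 1) => hab; nra.
Qed.

Lemma three_quarters_or3_atom a b c : 0 <= a <= 1 -> 0 <= b <= 1 -> 0 <= c <= 1 ->
  3 / 4 * Order.min (a + b + c) 1 <= 1 - (1 - a) * (1 - b) * (1 - c) + a * b * (1 - c).
Proof.
move=> /andP[a0 a1] /andP[b0 b1] /andP[c0 c1].
have sq : 0 <= (a + b - c) ^+ 2 by rewrite sqr_ge0.
have sqc : 0 <= (c - (1 - (a + b))) ^+ 2 by rewrite sqr_ge0.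
case: (lerP (a + b + c) 1) => hs.
  have : 0 <= (a + b + c) * (1 - (a + b + c)) by apply: mulr_ge0; lra.
  nra.
case: (lerP (a + b) 1) => hab; nra.
Qed.

Lemma three_quarters_rank2_atom a b c : 0 <= a <= 1 -> 0 <= b <= 1 -> 0 <= c <= 1 ->
  3 / 4 * Order.min (a + b + c) 2 <= a + b + c - a * b * c + a * (1 - b) * (1 - c).
Proof.
move=> /andP[a0 a1] /andP[b0 b1] /andP[c0 c1].
case: (lerP (a + b + c) 2) => hs; nra.
Qed.

Lemma three_quarters_or3 a b c : 0 <= a <= 1 -> 0 <= b <= 1 -> 0 <= c <= 1 ->
  3 / 4 * Order.min (a + b + c) 1 <= 1 - (1 - a) * (1 - b) * (1 - c) +
    Order.min (Order.min ((1 - a) * (1 - b) * (1 - c)) (a * b * (1 - c)))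
              (Order.min (a * (1 - b) * c) ((1 - a) * b * c)).
Proof.
move=> ha hb hc; rewrite -lerBlDl !le_min -!andbA; apply/and4P; split.
- have : Order.min (a + b + c) 1 <= 1 by rewrite ge_min lexx orbT.
  lra.
- by rewrite lerBlDl; apply: three_quarters_or3_atom.
- have := three_quarters_or3_atom ha hc hb.
  have -> : a + c + b = a + b + c by ring.
  lra.
- have := three_quarters_or3_atom hb hc ha.
  have -> : b + c + a = a + b + c by ring.
  lra.
Qed.

Lemma three_quarters_rank2 a b c : 0 <= a <= 1 -> 0 <= b <= 1 -> 0 <= c <= 1 ->
  3 / 4 * Order.min (a + b + c) 2 <= a + b + c - a * b * c +
    Order.min (Order.min (a * b * c) (a * (1 - b) * (1 - c)))
              (Order.min ((1 - a) * b * (1 - c)) ((1 - a) * (1 - b) * c)).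
Proof.
move=> ha hb hc; rewrite -lerBlDl !le_min -!andbA; apply/and4P; split.
- have : Order.min (a + b + c) 2 <= a + b + c by rewrite ge_min lexx.
  by move: ha hb hc => /andP[? _] /andP[? _] /andP[? _]; lra.
- by rewrite lerBlDl; apply: three_quarters_rank2_atom.
- have := three_quarters_rank2_atom hb ha hc.
  have -> : b + a + c = a + b + c by ring.
  lra.
- have := three_quarters_rank2_atom hc ha hb.
  have -> : c + a + b = a + b + c by ring.
  lra.
Qed.
End ThreeQuarters.

Section PairwiseLaws.
Variables (R : realType) (n : nat) (x : 'I_n -> R).

Definition pairwise_law (B : {set 'I_n}) (g : {set 'I_n} -> R) : Prop :=
  (forall T : {set 'I_n}, T \subset B -> 0 <= g T) /\
  (forall L : {set 'I_n}, L \subset B -> (#|L| <= 2)%N ->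
     \sum_(T : {set 'I_n} | T \subset B) g T * (L \subset T)%:R = \prod_(l in L) x l).

Lemma block_law_pairwise t (B : {set 'I_n}) :
  (forall T : {set 'I_n}, T \subset B -> 0 <= block_law x t B T) ->
  t = 0 \/ (2 < #|B|)%N -> pairwise_law B (block_law x t B).
Proof.
move=> ge0 ht; split=> // L sLB cardL; rewrite block_law_moment //.
case: ht => [->|cardB]; first by rewrite mul0r addr0.
suff /negbTE-> : ~~ (B \subset L) by rewrite mulr0 addr0.
by apply: contraTN cardB => /subset_leq_card sBL; rewrite -leqNgt (leq_trans sBL).
Qed.

Lemma pairwise_law_sum1 B g : pairwise_law B g ->
  \sum_(T : {set 'I_n} | T \subset B) g T = 1.
Proof.
case=> _ /(_ set0 (sub0set B)); rewrite cards0 big_set0 => /(_ isT) <-.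
by apply: eq_bigr => T _; rewrite sub0set mulr1.
Qed.

Lemma pairwise_law_mem B g j : pairwise_law B g -> j \in B ->
  \sum_(T : {set 'I_n} | T \subset B) g T * (j \in T)%:R = x j.
Proof.
case=> _ /(_ [set j]); rewrite sub1set cards1 big_set1 => h jB; rewrite -h //.
by apply: eq_bigr => T _; rewrite sub1set.
Qed.

Lemma pairwise_law_mem2 B g i j : pairwise_law B g -> i \in B -> j \in B -> i != j ->
  \sum_(T : {set 'I_n} | T \subset B) g T * ((i \in T) && (j \in T))%:R = x i * x j.
Proof.
case=> _ /(_ [set i; j]) + iB jB ij.
rewrite subUset !sub1set iB jB cards2 ij big_setU1 ?inE //= big_set1 => /(_ isT isT) <-.
by apply: eq_bigr => T _; rewrite subUset !sub1set.
Qed.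

End PairwiseLaws.

Section ProductOfLaws.
Variables (R : realType) (n m : nat) (blk : 'I_n -> 'I_m) (x : 'I_n -> R).
Variable g : 'I_m -> {set 'I_n} -> R.
Hypothesis g_law : forall k, pairwise_law x (block blk k) (g k).

Definition prod_of_laws : {ffun {set 'I_n} -> R} :=
  [ffun S => \prod_(k < m) g k (S :&: block blk k)].

Lemma prod_of_laws_moment (L : {set 'I_n}) : (#|L| <= 2)%N ->
  \sum_(S : {set 'I_n}) prod_of_laws S * (L \subset S)%:R = \prod_(l in L) x l.
Proof.
move=> cardL; under [LHS]eq_bigr do rewrite ffunE (subset_natr_blocks blk) -big_split /=.
rewrite (sum_prod_blocks blk (fun k T => g k T * (L :&: block blk k \subset T)%:R)).
rewrite (prod_partition_blocks blk); apply: eq_bigr => k _.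
apply: (g_law k).2; first exact: subsetIr.
exact: leq_trans (subset_leq_card (subsetIl _ _)) cardL.
Qed.

Lemma pair_feasible_prod_of_laws : pair_feasible x prod_of_laws.
Proof.
have moment_mem (P : pred {set 'I_n}) (L : {set 'I_n}) : (#|L| <= 2)%N ->
    (forall S : {set 'I_n}, P S = (L \subset S)) ->
    \sum_(S : {set 'I_n} | P S) prod_of_laws S = \prod_(l in L) x l.
  move=> cardL PL; rewrite -prod_of_laws_moment // big_mkcond; apply: eq_bigr => S _.
  by rewrite PL; case: (L \subset S); rewrite ?mulr1 ?mulr0.
split; first split; last first.
- move=> i j ij; have card_ij : (#|[set i; j]| <= 2)%N by rewrite cards2 ltnS leq_b1.
  rewrite (moment_mem _ _ card_ij) => [|S]; last by rewrite subUset !sub1set.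
  by rewrite big_setU1 ?big_set1 // inE; apply: contraTN ij => /eqP ->; rewrite ltnn.
- split=> [|j].
    by rewrite (moment_mem _ set0) ?cards0 ?big_set0 // => S; rewrite sub0set.
  by rewrite (moment_mem _ [set j]) ?cards1 ?big_set1 // => S; rewrite sub1set.
- move=> S; rewrite ffunE; apply: prodr_ge0 => k _.
  by apply: (g_law k).1; apply: subsetIr.
Qed.

Lemma expect_prod_of_laws (f : 'I_m -> {set 'I_n} -> R) :
  \sum_(S : {set 'I_n}) prod_of_laws S * \sum_(k < m) f k (S :&: block blk k) =
  \sum_(k < m) \sum_(T : {set 'I_n} | T \subset block blk k) g k T * f k T.
Proof.
under eq_bigr do rewrite mulr_sumr; rewrite exchange_big; apply: eq_bigr => k _.
pose fk l (T : {set 'I_n}) := if l == k then f k T else 1.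
transitivity (\sum_(S : {set 'I_n})
  \prod_(l < m) (g l (S :&: block blk l) * fk l (S :&: block blk l))).
  apply: eq_bigr => S _; rewrite ffunE big_split /=; congr (_ * _).
  by rewrite (bigD1 k) //= big1 => [|l /negbTE lk]; rewrite /fk ?eqxx ?mulr1 ?lk.
rewrite (sum_prod_blocks blk (fun l T => g l T * fk l T)) (bigD1 k) //=.
rewrite [X in _ * X]big1 => [|l lk].
  by rewrite mulr1; apply: eq_bigr => T _; rewrite /fk eqxx.
by rewrite /fk (negbTE lk); under eq_bigr do rewrite mulr1; apply: pairwise_law_sum1.
Qed.

End ProductOfLaws.

Lemma concave_closure_le_upper_pairwise (R : realType) (n : nat) (f : {set 'I_n} -> R)
    (x : 'I_n -> R) (c : R) (th : {ffun {set 'I_n} -> R}) :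
  (forall S, 0 <= f S) -> 0 <= c -> pair_feasible x th ->
  (forall theta, marg_feasible x theta ->
     \sum_(S : {set 'I_n}) theta S * f S <= c * \sum_(S : {set 'I_n}) th S * f S) ->
  concave_closure f x <= c * upper_pairwise_ext f x.
Proof.
move=> f_ge0 c_ge0 th_pair th_dom.
pose V := [set v | exists theta, pair_feasible x theta /\
  v = \sum_(S : {set 'I_n}) theta S * f S]%classic.
have V_th : V (\sum_(S : {set 'I_n}) th S * f S) by exists th.
have V_bounded : has_ubound V.
  exists (\sum_(S : {set 'I_n}) f S) => _ [theta [[[theta_ge0 [theta_sum _]] _] ->]].
  apply: ler_sum => S _; rewrite ler_piMl // -theta_sum (bigD1 S) //= lerDl.
  by apply: sumr_ge0 => T _.
apply: ge_sup; first by exists (\sum_(S : {set 'I_n}) th S * f S), th; case: th_pair.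
move=> _ [theta [theta_marg ->]]; apply: le_trans (th_dom _ theta_marg) _.
by rewrite ler_wpM2l // (ub_le_sup V_bounded V_th).
Qed.

Section UniformRanks.
Variables (R : realType) (n : nat) (x : 'I_n -> R).

Definition urank (k : nat) (A S : {set 'I_n}) : R := (minn #|A :&: S| k)%:R.

Lemma card_setI_sum (A S : {set 'I_n}) : #|A :&: S| = (\sum_(j in A) (j \in S))%N.
Proof.
rewrite -sum1_card big_mkcond [RHS]big_mkcond; apply: eq_bigr => j _.
by rewrite inE; case: (j \in A); case: (j \in S).
Qed.

Lemma urank_setIr k (A B S : {set 'I_n}) : A \subset B -> urank k A (S :&: B) = urank k A S.
Proof. by move=> sAB; rewrite /urank setIA setIAC (setIidPl sAB). Qed.

Lemma urank_set1 j T : urank 1 [set j] T = (j \in T)%:R.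
Proof. by rewrite /urank card_setI_sum big_set1; case: (j \in T). Qed.

Lemma urank_set2 i j T : i != j ->
  urank 1 [set i; j] T = (i \in T)%:R + (j \in T)%:R - ((i \in T) && (j \in T))%:R.
Proof.
move=> ij; rewrite /urank card_setI_sum big_setU1 ?big_set1 ?inE //=.
by case: (i \in T); case: (j \in T); rewrite /= ?subrr ?addr0 ?subr0 ?add0r ?addrK.
Qed.

Section Marginals.
Variable theta : {ffun {set 'I_n} -> R}.
Hypothesis theta_marg : marg_feasible x theta.

Lemma expect_mem j : \sum_(S : {set 'I_n}) theta S * (j \in S)%:R = x j.
Proof.
case: theta_marg => _ [_ <-]; rewrite [RHS]big_mkcond; apply: eq_bigr => S _.
by case: (j \in S); rewrite ?mulr1 ?mulr0.
Qed.

Lemma expect_urank_le k (A : {set 'I_n}) :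
  \sum_(S : {set 'I_n}) theta S * urank k A S <= Order.min (\sum_(j in A) x j) k%:R.
Proof.
case: theta_marg => theta_ge0 [theta_sum _]; rewrite le_min; apply/andP; split.
  under [X in _ <= X]eq_bigr do rewrite -expect_mem.
  rewrite exchange_big /=; apply: ler_sum => S _; rewrite -mulr_sumr.
  apply: ler_wpM2l; first exact: theta_ge0.
  by rewrite /urank -natr_sum ler_nat card_setI_sum geq_minl.
have <- : \sum_(S : {set 'I_n}) theta S * k%:R = k%:R by rewrite -mulr_suml theta_sum mul1r.
apply: ler_sum => S _; apply: ler_wpM2l; first exact: theta_ge0.
by rewrite /urank ler_nat geq_minr.
Qed.

End Marginals.

Definition dominating_law (B : {set 'I_n}) (f g : {set 'I_n} -> R) : Prop :=
  pairwise_law x B g /\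
  forall theta : {ffun {set 'I_n} -> R}, marg_feasible x theta ->
    \sum_(S : {set 'I_n}) theta S * f (S :&: B) <=
    4 / 3 * \sum_(T : {set 'I_n} | T \subset B) g T * f T.

Section Comparison.
Variables (B : {set 'I_n}) (g : {set 'I_n} -> R).
Hypothesis g_law : pairwise_law x B g.

Definition urank_approx (k : nat) (A : {set 'I_n}) : bool :=
  (A \subset B) &&
  (3 / 4 * Order.min (\sum_(j in A) x j) k%:R <=
   \sum_(T : {set 'I_n} | T \subset B) g T * urank k A T).

Lemma dominating_law_urank_combination (F0 : R) (cs : seq (R * nat * {set 'I_n}))
    (f : {set 'I_n} -> R) :
  0 <= F0 -> all (fun c => 0 <= c.1.1) cs -> all (fun c => urank_approx c.1.2 c.2) cs ->
  (forall T : {set 'I_n}, T \subset B -> f T = F0 + \sum_(c <- cs) c.1.1 * urank c.1.2 c.2 T) ->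
  dominating_law B f g.
Proof.
move=> F0_ge0 /allP cs_ge0 /allP cs_approx f_comb; split=> // theta theta_marg.
have [_ [theta_sum _]] := theta_marg.
have lhs : \sum_(S : {set 'I_n}) theta S * f (S :&: B) =
    F0 + \sum_(c <- cs) c.1.1 * \sum_(S : {set 'I_n}) theta S * urank c.1.2 c.2 S.
  rewrite -[F0]mul1r -theta_sum mulr_suml.
  under eq_bigr => S _ do rewrite f_comb ?subsetIr // mulrDr big_distrr.
  rewrite big_split /= exchange_big; congr (_ + _); apply: eq_big_seq => c c_cs.
  rewrite mulr_sumr; apply: eq_bigr => S _; rewrite mulrCA urank_setIr //.
  by case/andP: (cs_approx c c_cs).
have rhs : \sum_(T : {set 'I_n} | T \subset B) g T * f T =
    F0 + \sum_(c <- cs) c.1.1 * \sum_(T : {set 'I_n} | T \subset B) g T * urank c.1.2 c.2 T.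
  rewrite -[F0]mul1r -(pairwise_law_sum1 g_law) mulr_suml.
  under eq_bigr => T sTB do rewrite f_comb // mulrDr big_distrr.
  rewrite big_split /= exchange_big; congr (_ + _); apply: eq_bigr => c _.
  by rewrite mulr_sumr; apply: eq_bigr => T _; rewrite mulrCA.
rewrite lhs rhs mulrDr; apply: lerD; first lra.
rewrite mulr_sumr big_seq_cond [X in _ <= X]big_seq_cond; apply: ler_sum => c.
rewrite andbT => c_cs; have /andP[_ c_approx] := cs_approx c c_cs.
rewrite mulrCA; apply: ler_wpM2l; first exact: cs_ge0.
by apply: le_trans (expect_urank_le theta_marg _ _) _; lra.
Qed.

Hypothesis x01 : forall j, 0 <= x j <= 1.

Lemma urank_approx_set1 j : j \in B -> urank_approx 1 [set j].
Proof.
move=> jB; rewrite /urank_approx sub1set jB big_set1 /=.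
under [X in _ <= X]eq_bigr do rewrite urank_set1; rewrite (pairwise_law_mem g_law jB).
have := x01 j; have : Order.min (x j) 1 <= x j by rewrite ge_min lexx.
lra.
Qed.

Lemma urank_approx_set2 i j : i \in B -> j \in B -> i != j -> urank_approx 1 [set i; j].
Proof.
move=> iB jB ij; rewrite /urank_approx subUset !sub1set iB jB /=.
under [X in _ <= X]eq_bigr do rewrite urank_set2 // !mulrDr mulrN.
rewrite !big_split /= sumrN (pairwise_law_mem g_law iB) (pairwise_law_mem g_law jB).
rewrite (pairwise_law_mem2 g_law iB jB ij).
by rewrite big_setU1 ?big_set1 ?inE //= three_quarters_or2.
Qed.

End Comparison.

End UniformRanks.

Arguments urank {R n}.

Section SmallBlocks.
Variables (R : realType) (n : nat) (x : 'I_n -> R) (f : {set 'I_n} -> R).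
Hypothesis x01 : forall j, 0 <= x j <= 1.

Lemma pairwise_prod_law B : pairwise_law x B (block_law x 0 B).
Proof.
apply: block_law_pairwise; last by left.
move=> T _; rewrite /block_law mul0r addr0; apply: prodr_ge0 => j _.
by case: (j \in T); have /andP[? ?] := x01 j; rewrite ?subr_ge0.
Qed.

Lemma dominating_law_set1 a : mono_submod_on [set a] f ->
  exists g, dominating_law x [set a] f g.
Proof.
case=> f_ge0 [f_mono _]; have g_law := pairwise_prod_law [set a].
exists (block_law x 0 [set a]).
apply: (dominating_law_urank_combination g_law (cs := [:: (f [set a] - f set0, 1%N, [set a])])).
- exact: f_ge0 (sub0set _).
- by rewrite /= andbT subr_ge0 f_mono ?sub0set.
- by rewrite /= andbT (urank_approx_set1 g_law x01) ?set11.
move=> T; rewrite subset1 big_seq1 urank_set1 => /orP[] /eqP ->.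
  by rewrite set11 mulr1 addrC subrK.
by rewrite inE mulr0 addr0.
Qed.

Lemma subset_set2 (a b : 'I_n) (T : {set 'I_n}) : T \subset [set a; b] ->
  T = (if a \in T then [set a] else set0) :|: (if b \in T then [set b] else set0).
Proof.
move=> sT; apply/setP => j; apply/idP/idP => [jT|].
  by move: (subsetP sT j jT); rewrite !inE => /orP[] /eqP <-; rewrite jT inE eqxx ?orbT.
by rewrite inE => /orP[]; case: ifP; rewrite ?inE // => + /eqP ->.
Qed.

Lemma dominating_law_set2 a b : a != b -> mono_submod_on [set a; b] f ->
  exists g, dominating_law x [set a; b] f g.
Proof.
move=> ab [f_ge0 [f_mono f_submod]]; have g_law := pairwise_prod_law [set a; b].
have aB : a \in [set a; b] by rewrite !inE eqxx.
have bB : b \in [set a; b] by rewrite !inE eqxx orbT.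
have m_a : f [set b] <= f [set a; b].
  by apply: f_mono; rewrite ?subsetUr ?subUset ?sub1set ?aB ?bB.
have m_b : f [set a] <= f [set a; b].
  by apply: f_mono; rewrite ?subsetUl ?subUset ?sub1set ?aB ?bB.
have s_ab : f set0 + f [set a; b] <= f [set a] + f [set b].
  have disj : [set a] :&: [set b] = set0 by apply/eqP; rewrite setI_eq0 disjoints1 inE.
  by rewrite -disj; apply: f_submod; rewrite sub1set ?aB ?bB.
exists (block_law x 0 [set a; b]).
apply: (dominating_law_urank_combination g_law
  (cs := [:: (f [set a; b] - f [set b], 1%N, [set a]); (f [set a; b] - f [set a], 1%N, [set b]);
             (f [set a] + f [set b] - f [set a; b] - f set0, 1%N, [set a; b])])).
- exact: f_ge0 (sub0set _).
- by rewrite /= andbT; do ! (apply/andP; split); lra.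
- by rewrite /= andbT !(urank_approx_set1 g_law x01) ?(urank_approx_set2 g_law x01).
move=> T sT; rewrite !big_cons big_nil urank_set2 // !urank_set1 /= [in LHS](subset_set2 sT).
by case: (a \in T); case: (b \in T); rewrite /= ?setU0 ?set0U; ring.
Qed.

End SmallBlocks.

Section TripleBlock.
Variables (R : realType) (n : nat) (x : 'I_n -> R) (a b c : 'I_n).
Hypothesis x01 : forall j, 0 <= x j <= 1.
Hypotheses (ab : a != b) (ac : a != c) (bc : b != c).

Lemma prod_set3 (F : 'I_n -> R) : \prod_(j in [set a; b; c]) F j = F a * F b * F c.
Proof.
by rewrite -setUA big_setU1 ?big_setU1 ?big_set1 ?inE ?negb_or ?ab ?ac ?bc //= mulrA.
Qed.

Lemma sum_set3 (F : 'I_n -> R) : \sum_(j in [set a; b; c]) F j = F a + F b + F c.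
Proof.
by rewrite -setUA big_setU1 ?big_setU1 ?big_set1 ?inE ?negb_or ?ab ?ac ?bc //= addrA.
Qed.

Lemma card_set3 : #|[set a; b; c]| = 3%N.
Proof. by rewrite -setUA !cardsU1 cards1 !inE negb_or ab ac bc. Qed.

Lemma block_law_set3 t T : block_law x t [set a; b; c] T =
  (if a \in T then x a else 1 - x a) * (if b \in T then x b else 1 - x b) *
    (if c \in T then x c else 1 - x c) +
  t * ((if a \in T then 1 else -1) * (if b \in T then 1 else -1) * (if c \in T then 1 else -1)).
Proof. by rewrite /block_law /prod_law /parity !prod_set3. Qed.

(* Shifting the product law by [t * parity] leaves all moments of order at most 2
   unchanged; it stays nonnegative as long as [t] is at most the smallest product-law
   probability of a subset of even size, which loses mass, and [- t] at most the smallest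
   one of a subset of odd size. *)
Definition even_atoms_min : R :=
  Order.min (Order.min ((1 - x a) * (1 - x b) * (1 - x c)) (x a * x b * (1 - x c)))
            (Order.min (x a * (1 - x b) * x c) ((1 - x a) * x b * x c)).

Definition odd_atoms_min : R :=
  Order.min (Order.min (x a * x b * x c) (x a * (1 - x b) * (1 - x c)))
            (Order.min ((1 - x a) * x b * (1 - x c)) ((1 - x a) * (1 - x b) * x c)).

Lemma atoms_min_ge0 : 0 <= even_atoms_min /\ 0 <= odd_atoms_min.
Proof.
move: (x01 a) (x01 b) (x01 c) => /andP[a0 a1] /andP[b0 b1] /andP[c0 c1].
by rewrite !le_min -!andbA; split; apply/and4P; split; rewrite !mulr_ge0 ?subr_ge0.
Qed.

Lemma block_law_set3_ge0 t T : - odd_atoms_min <= t <= even_atoms_min ->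
  0 <= block_law x t [set a; b; c] T.
Proof.
rewrite /even_atoms_min /odd_atoms_min lerNl !le_min.
move=> /andP[/andP[/andP[? ?] /andP[? ?]] /andP[/andP[? ?] /andP[? ?]]].
by rewrite block_law_set3; case: (a \in T); case: (b \in T); case: (c \in T); lra.
Qed.

Section ShiftedLaw.
Variable t : R.
Hypothesis t_range : - odd_atoms_min <= t <= even_atoms_min.
Let g := block_law x t [set a; b; c].

Lemma pairwise_block_law_set3 : pairwise_law x [set a; b; c] g.
Proof.
apply: block_law_pairwise => [T _|]; first exact: block_law_set3_ge0.
by right; rewrite card_set3.
Qed.

Lemma expect_urank1_set3 :
  \sum_(T : {set 'I_n} | T \subset [set a; b; c]) g T * urank 1 [set a; b; c] T =
  1 - (1 - x a) * (1 - x b) * (1 - x c) + t.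
Proof.
have urank1 (T : {set 'I_n}) :
    T \subset [set a; b; c] -> urank 1 [set a; b; c] T = 1 - (T == set0)%:R.
  move=> sT; rewrite /urank (setIidPr sT).
  have [->|/negbTE T0] := eqVneq T set0; first by rewrite cards0 subrr.
  by rewrite subr0 (minn_idPr _) // card_gt0 T0.
under eq_bigr => T sT do rewrite urank1 // mulrBr mulr1.
rewrite sumrB (pairwise_law_sum1 pairwise_block_law_set3) (bigD1 set0) ?sub0set //= eqxx mulr1.
rewrite big1 => [|T /andP[_ /negbTE->]]; last by rewrite mulr0.
by rewrite addr0 /g block_law_set3 !inE /=; ring.
Qed.

Lemma expect_urank2_set3 :
  \sum_(T : {set 'I_n} | T \subset [set a; b; c]) g T * urank 2 [set a; b; c] T =
  x a + x b + x c - x a * x b * x c - t.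
Proof.
have urank2 (T : {set 'I_n}) : T \subset [set a; b; c] ->
    urank 2 [set a; b; c] T =
    \sum_(j in [set a; b; c]) (j \in T)%:R - ([set a; b; c] \subset T)%:R.
  move=> sT; rewrite -natr_sum -card_setI_sum /urank (setIidPr sT).
  have [sBT|nsBT] := boolP ([set a; b; c] \subset T).
    have -> : T = [set a; b; c] by apply/eqP; rewrite eqEsubset sT.
    by rewrite card_set3 (minn_idPr _) //=; ring.
  have : T \proper [set a; b; c] by rewrite properE sT.
  by move/proper_card; rewrite card_set3 ltnS => /minn_idPl ->; rewrite subr0.
under eq_bigr => T sT do rewrite urank2 // mulrBr mulr_sumr.
rewrite sumrB exchange_big /=.
under eq_bigr => j jB do rewrite (pairwise_law_mem pairwise_block_law_set3 jB).
by rewrite sum_set3 /g block_law_moment // prod_set3 subxx mulr1 opprD addrA.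
Qed.

End ShiftedLaw.

Lemma even_shift_range : - odd_atoms_min <= even_atoms_min <= even_atoms_min.
Proof. by have [e0 o0] := atoms_min_ge0; rewrite lexx andbT; lra. Qed.

Lemma odd_shift_range : - odd_atoms_min <= - odd_atoms_min <= even_atoms_min.
Proof. by have [e0 o0] := atoms_min_ge0; rewrite lexx; lra. Qed.

Lemma urank_approx_or3 :
  urank_approx x [set a; b; c] (block_law x even_atoms_min [set a; b; c]) 1 [set a; b; c].
Proof.
rewrite /urank_approx subxx sum_set3 expect_urank1_set3 ?even_shift_range //.
exact: three_quarters_or3.
Qed.

Lemma urank_approx_rank2 :
  urank_approx x [set a; b; c] (block_law x (- odd_atoms_min) [set a; b; c]) 2 [set a; b; c].
Proof.
rewrite /urank_approx subxx sum_set3 expect_urank2_set3 ?odd_shift_range // opprK.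
exact: three_quarters_rank2.
Qed.

Definition sub3 (p q r : bool) : {set 'I_n} :=
  [set j | [|| p && (j == a), q && (j == b) | r && (j == c)]].

Lemma sub3_bits (T : {set 'I_n}) :
  T \subset [set a; b; c] -> T = sub3 (a \in T) (b \in T) (c \in T).
Proof.
move=> sT; apply/setP => j; rewrite inE; apply/idP/idP => [jT|].
  by move: (subsetP sT j jT); rewrite !inE -orbA => /or3P[] /eqP <-; rewrite jT eqxx ?orbT.
by case/or3P => /andP[+ /eqP ->].
Qed.

Lemma sub3_subset p q r : sub3 p q r \subset [set a; b; c].
Proof. by apply/subsetP => j; rewrite !inE => /or3P[] /andP[_ ->]; rewrite ?orbT. Qed.

Lemma sub3S p q r p' q' r' :
  p ==> p' -> q ==> q' -> r ==> r' -> sub3 p q r \subset sub3 p' q' r'.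
Proof.
move=> /implyP pp /implyP qq /implyP rr; apply/subsetP => j; rewrite !inE.
by case/or3P => /andP[h ->]; rewrite ?(pp h) ?(qq h) ?(rr h) ?orbT.
Qed.

Lemma sub3U p q r p' q' r' :
  sub3 p q r :|: sub3 p' q' r' = sub3 (p || p') (q || q') (r || r').
Proof.
apply/setP => j; rewrite !inE.
by case: (j == a); case: (j == b); case: (j == c); rewrite ?andbT ?andbF ?orbF;
  case: p; case: q; case: r; case: p'; case: q'; case: r'.
Qed.

Lemma sub3I p q r p' q' r' :
  sub3 p q r :&: sub3 p' q' r' = sub3 (p && p') (q && q') (r && r').
Proof.
move: (negbTE ab) (negbTE ac) (negbTE bc) => nab nac nbc.
apply/setP => j; rewrite !inE.
have [->|ja] := eqVneq j a; first by rewrite nab nac !andbT !andbF !orbF.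
have [->|jb] := eqVneq j b; first by rewrite nbc !andbT !andbF !orbF.
have [_|_] := eqVneq j c; first by rewrite !andbT !andbF.
by rewrite !andbF.
Qed.

Lemma urank_set3 k T :
  urank k [set a; b; c] T = (minn ((a \in T) + (b \in T) + (c \in T)) k)%:R :> R.
Proof.
rewrite /urank card_setI_sum -setUA big_setU1 ?big_setU1 ?big_set1 ?inE ?negb_or ?ab ?ac ?bc //=.
by rewrite addnA.
Qed.

Section Decomposition.
Variable f : {set 'I_n} -> R.
Hypothesis f_ms : mono_submod_on [set a; b; c] f.

Let F p q r := f (sub3 p q r).

(* [D] is the third-order Moebius coefficient of [f]. Both lists below decompose [f]
   exactly; the coefficients of [or3_terms] are nonnegative when [0 <= D] and those of
   [rank2_terms] when [D <= 0], by monotonicity and submodularity. *)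
Let D := F true true true - F true true false - F true false true - F false true true
  + F true false false + F false true false + F false false true - F false false false.

Let singletons : seq (R * nat * {set 'I_n}) :=
  [:: (F true true true - F false true true, 1%N, [set a]);
      (F true true true - F true false true, 1%N, [set b]);
      (F true true true - F true true false, 1%N, [set c])].

Let or3_terms := singletons ++
  [:: (F true false true + F false true true - F true true true - F false false true,
       1%N, [set a; b]);
      (F true true false + F false true true - F true true true - F false true false,
       1%N, [set a; c]);
      (F true true false + F true false true - F true true true - F true false false,
       1%N, [set b; c]);
      (D, 1%N, [set a; b; c])].

Let rank2_terms := singletons ++
  [:: (F true false false + F false true false - F true true false - F false false false,
       1%N, [set a; b]);
      (F true false false + F false false true - F true false true - F false false false,
       1%N, [set a; c]);
      (F false true false + F false false true - F false true true - F false false false,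
       1%N, [set b; c]);
      (- D, 2%N, [set a; b; c])].

Lemma urank_decomposition_or3 (T : {set 'I_n}) : T \subset [set a; b; c] ->
  f T = F false false false + \sum_(u <- or3_terms) u.1.1 * urank u.1.2 u.2 T.
Proof.
move=> sT; rewrite [in LHS](sub3_bits sT) !big_cons big_nil /=.
rewrite urank_set3 !urank_set2 // !urank_set1.
by case: (a \in T); case: (b \in T); case: (c \in T); rewrite /D /F /minn /=; ring.
Qed.

Lemma urank_decomposition_rank2 (T : {set 'I_n}) : T \subset [set a; b; c] ->
  f T = F false false false + \sum_(u <- rank2_terms) u.1.1 * urank u.1.2 u.2 T.
Proof.
move=> sT; rewrite [in LHS](sub3_bits sT) !big_cons big_nil /=.
rewrite urank_set3 !urank_set2 // !urank_set1.
by case: (a \in T); case: (b \in T); case: (c \in T); rewrite /D /F /minn /=; ring.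
Qed.

Let F_mono p q r p' q' r' : p ==> p' -> q ==> q' -> r ==> r' -> F p q r <= F p' q' r'.
Proof. by move=> *; apply: f_ms.2.1; rewrite ?sub3_subset ?sub3S. Qed.

Let F_submod p q r p' q' r' :
  F (p && p') (q && q') (r && r') + F (p || p') (q || q') (r || r') <= F p q r + F p' q' r'.
Proof. by rewrite /F -sub3I -sub3U; apply: f_ms.2.2; apply: sub3_subset. Qed.

Lemma dominating_law_set3 : exists g, dominating_law x [set a; b; c] f g.
Proof.
have F0_ge0 : 0 <= F false false false by apply: f_ms.1; apply: sub3_subset.
have m_a : F false true true <= F true true true by apply: F_mono.
have m_b : F true false true <= F true true true by apply: F_mono.
have m_c : F true true false <= F true true true by apply: F_mono.
have [aB bB cB] : [/\ a \in [set a; b; c], b \in [set a; b; c] & c \in [set a; b; c]].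
  by rewrite !inE !eqxx ?orbT.
case: (lerP 0 D) => D_sign.
  have g_law := pairwise_block_law_set3 even_shift_range.
  exists (block_law x even_atoms_min [set a; b; c]).
  apply: (dominating_law_urank_combination g_law F0_ge0 _ _ urank_decomposition_or3).
    have s_ab : F false false true + F true true true <= F true false true + F false true true.
      exact: (@F_submod true false true false true true).
    have s_ac : F false true false + F true true true <= F true true false + F false true true.
      exact: (@F_submod true true false false true true).
    have s_bc : F true false false + F true true true <= F true true false + F true false true.
      exact: (@F_submod true true false true false true).
    by rewrite /= andbT; do ! (apply/andP; split); lra.
  rewrite /= andbT urank_approx_or3 !(urank_approx_set1 g_law x01) //.
  by rewrite !(urank_approx_set2 g_law x01).
have g_law := pairwise_block_law_set3 odd_shift_range.
exists (block_law x (- odd_atoms_min) [set a; b; c]).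
apply: (dominating_law_urank_combination g_law F0_ge0 _ _ urank_decomposition_rank2).
  have s_ab : F false false false + F true true false <= F true false false + F false true false.
    exact: (@F_submod true false false false true false).
  have s_ac : F false false false + F true false true <= F true false false + F false false true.
    exact: (@F_submod true false false false false true).
  have s_bc : F false false false + F false true true <= F false true false + F false false true.
    exact: (@F_submod false true false false false true).
  by rewrite /= andbT; do ! (apply/andP; split); lra.
rewrite /= andbT urank_approx_rank2 !(urank_approx_set1 g_law x01) //.
by rewrite !(urank_approx_set2 g_law x01).
Qed.

End Decomposition.

End TripleBlock.

Lemma dominating_law_exists (R : realType) (n : nat) (x : 'I_n -> R) (B : {set 'I_n})
    (f : {set 'I_n} -> R) :
  (forall j, 0 <= x j <= 1) -> (1 <= #|B| <= 3)%N -> mono_submod_on B f ->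
  exists g, dominating_law x B f g.
Proof.
move=> x01 /andP[B_gt0 B_le3]; have [a aB] := card_gt0P B_gt0.
have card_Ba : #|B :\ a| = #|B|.-1 by rewrite (cardsD1 a B) aB.
case: (ltngtP #|B| 2) => [B_lt2|B_gt2|/eqP/cards2P[a' [b [ab ->]]]].
- have /cards1P[a' ->] : #|B| == 1%N by rewrite eqn_leq B_gt0 -ltnS B_lt2.
  exact: dominating_law_set1.
- have /cards2P[b [c [bc BDa]]] : #|B :\ a| == 2%N by rewrite card_Ba; apply/eqP; lia.
  have /setD1P[ba _] : b \in B :\ a by rewrite BDa !inE eqxx.
  have /setD1P[ca _] : c \in B :\ a by rewrite BDa !inE eqxx orbT.
  rewrite -(setD1K aB) BDa setUA.
  by apply: dominating_law_set3; rewrite // eq_sym.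
- exact: dominating_law_set2.
Qed.

Theorem mainTheorem10 (R : realType) (n m : nat) (blk : 'I_n -> 'I_m)
    (fi : 'I_m -> {set 'I_n} -> R)
    (hsize : forall i : 'I_m, (1 <= #|block blk i| <= 3)%N)
    (hf : forall i : 'I_m, mono_submod_on (block blk i) (fi i))
    (x : 'I_n -> R) (hx : forall j, 0 <= x j <= 1) :
  let f := fun S : {set 'I_n} => \sum_(i < m) fi i (S :&: block blk i) in
  concave_closure f x <= 4 / 3 * upper_pairwise_ext f x.
Proof.
cbv zeta; set f := fun S : {set 'I_n} => _.
have /fin_all_exists[g g_dom] :
    forall k, exists g, dominating_law x (block blk k) (fi k) g.
  by move=> k; apply: dominating_law_exists.
apply: (@concave_closure_le_upper_pairwise _ _ _ _ _ (prod_of_laws blk g)).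
- by move=> S; apply: sumr_ge0 => k _; apply: (hf k).1; apply: subsetIr.
- lra.
- by apply: pair_feasible_prod_of_laws => k; case: (g_dom k).
move=> theta theta_marg; rewrite /f (expect_prod_of_laws (fun k => (g_dom k).1)).
rewrite mulr_sumr; under eq_bigr do rewrite mulr_sumr.
rewrite exchange_big; apply: ler_sum => k _; exact: (g_dom k).2.
Qed.
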